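(* Let $a\ge3$ and let $H\in\mathfrak{H}$ (notation in context). Then \[ \{n\in\mathbb{N}:\ \text{every prime } q \text{ dividing } n \text{ satisfies } q\bmod a\in H\}\subseteq\mathcal{E}^*_a. \]
   Context: Let $a\ge3$ have canonical factorization $a=2^{\gamma_0}p_1^{\gamma_1}\cdots p_k^{\gamma_k}$ ($p_i$ distinct odd primes). Let $G=(\mathbb{Z}/a\mathbb{Z})^*$, identified by the Chinese remainder theorem with $G_0\times G_1\times\cdots\times G_k$, where $G_0=(\mathbb{Z}/2^{\gamma_0}\mathbb{Z})^*$ and $G_i=(\mathbb{Z}/p_i^{\gamma_i}\mathbb{Z})^*$. For $1\le i\le k$ let $H_i$ be the unique maximal subgroup of the cyclic group $G_i$ not containing $-1$ (its subgroup of odd order); its index is $2^{m_i}$ where $2^{m_i}\|p_i-1$. Let $H_0=G_0$ (trivial) if $\gamma_0\le1$; if $\gamma_0\ge2$, $H_0$ denotes any subgroup of $G_0$ of index $2$ not containing $-1\bmod 2^{\gamma_0}$. Let $\delta=0$ if $\gamma_0\le1$ and $\delta=2$ if $\gamma_0\ge2$, and define $m\ge1$ by $2^m\|\gcd(\delta,p_1-1,\dots,p_k-1)$. Let $\mathfrak{H}$ be the set of subgroups of $G$ of the form $G_0\times\cdots\times G_{i-1}\times H_i\times G_{i+1}\times\cdots\times G_k$ ($0\le i\le k$, any allowed choice of $H_0$ when $i=0$) with index $[G:H]=2^m$. For a positive integer $n$, $R(n;a)$ is the number of pairs $(x,y)$ of positive integers with $\frac an=\frac1x+\frac1y$, and $\mathcal{E}^*_a=\{n\in\mathbb{N}:R(n;a)=0,\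 \gcd(n,a)=1\}$. *)

From HB Require Import structures.
From mathcomp Require Import all_boot all_order all_algebra all_fingroup all_solvable.
Set Implicit Arguments. Unset Strict Implicit. Unset Printing Implicit Defensive.
Import GRing.Theory.

(* G = (Z/aZ)^* is the finite group {unit 'Z_a} (a >= 3).
   For b | a, the reduction map G -> (Z/bZ)^*, u |-> u mod b
   (a component of the CRT identification). *)
Definition redu (a b : nat) (u : {unit 'Z_a}) : {unit 'Z_b} :=
  insubd (1%g : {unit 'Z_b}) (inZp (nat_of_ord (FinRing.uval u)) : 'Z_b).
Arguments redu : clear implicits.

Definition minus1 (b : nat) : {unit 'Z_b} :=
  insubd (1%g : {unit 'Z_b}) (-1 : 'Z_b)%R.

(* Preimage in G of a subset K of (Z/bZ)^*; for b = p_i^{gamma_i} this is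
   the subgroup G_0 x ... x K x ... x G_k under the CRT identification. *)
Definition Hpre (a b : nat) (K : {set {unit 'Z_b}}) : {set {unit 'Z_a}} :=
  [set u | redu a b u \in K].
Arguments Hpre : clear implicits.

Definition gamma0 (a : nat) : nat := logn 2 a.

Definition delta (a : nat) : nat := if 1 < gamma0 a then 2 else 0.

Definition mexp (a : nat) : nat :=
  logn 2 (foldr gcdn (delta a) [seq p.-1 | p <- primes a & odd p]).

Definition Hodd (b : nat) : {set {unit 'Z_b}} := [set v | odd #[v]%g].
Arguments Hodd : clear implicits.

Definition in_frakH (a : nat) (H : {set {unit 'Z_a}}) : Prop :=
  #|[set: {unit 'Z_a}] : H|%g = 2 ^ mexp a /\
  [\/
      exists p, [/\ prime p, odd p, p %| a &
                   H = Hpre a (p ^ logn p a) (Hodd (p ^ logn p a))],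
      exists K : {group {unit 'Z_(2 ^ gamma0 a)}},
        [/\ 1 < gamma0 a, #|[set: {unit 'Z_(2 ^ gamma0 a)}] : K|%g = 2,
            minus1 (2 ^ gamma0 a) \notin K & H = Hpre a (2 ^ gamma0 a) K]
    |
      gamma0 a <= 1 /\ H = [set: {unit 'Z_a}] ].

Definition resid_in (a : nat) (H : {set {unit 'Z_a}}) (q : nat) : Prop :=
  exists2 u, u \in H & nat_of_ord (FinRing.uval u) = q %% a.

Definition egypt_sol (a n x y : nat) : Prop :=
  [/\ 0 < x, 0 < y &
      ((a%:R / n%:R : rat) = (x%:R)^-1 + (y%:R)^-1)%R].

Definition R_zero (a n : nat) : Prop := ~ exists x y, egypt_sol a n x y.

Definition Estar (a n : nat) : Prop := [/\ 0 < n, R_zero a n & coprime n a].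

From HB Require Import structures.
From mathcomp Require Import all_boot all_order all_algebra all_fingroup all_solvable.
From mathcomp Require Import ring.
Import GRing.Theory Num.Theory.

(* Every H in \frak{H} is a subgroup of (Z/aZ)^* avoiding -1 (the index condition
   2^m > 1 rules out H = G).  If every prime factor of n lies in H mod a, then so
   does every divisor of n, and n is prime to a.  A solution of a/n = 1/x + 1/y
   gives, after dividing x and y by their gcd, coprime x', y' with x'y' | n and
   a | x' + y'; then x' = -y' mod a with x', y' in H, so -1 = x'/y' lies in H. *)

Local Notation zval u := (nat_of_ord (FinRing.uval u)).

Lemma egypt_solE {a n x y} : 0 < n -> egypt_sol a n x y ->
  [/\ 0 < x, 0 < y & a * x * y = n * (x + y)].
Proof.
move=> n_gt0 [x_gt0 y_gt0 eq_a]; split=> //.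
have nz k : 0 < k -> (k%:R != 0 :> rat)%R by rewrite pnatr_eq0 -lt0n.
have : (a%:R * x%:R * y%:R = n%:R * (x%:R + y%:R) :> rat)%R.
  rewrite -[(a%:R)%R](mulfVK (nz n n_gt0)) eq_a; field.
  by rewrite !nz.
by rewrite -natrD -!natrM => /eqP; rewrite eqr_nat => /eqP.
Qed.

Lemma egypt_reduce {a n x y} : 0 < x -> coprime n a ->
    a * x * y = n * (x + y) ->
  exists x' y', x' * y' %| n /\ a %| x' + y'.
Proof.
rewrite coprime_sym => x_gt0 co_na eq_axy; set g := gcdn x y.
have g_gt0 : 0 < g by rewrite gcdn_gt0 x_gt0.
have def_x : x = x %/ g * g by rewrite divnK ?dvdn_gcdl.
have def_y : y = y %/ g * g by rewrite divnK ?dvdn_gcdr.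
set x' := x %/ g in def_x *; set y' := y %/ g in def_y *; clearbody x' y'.
have co_xy' : coprime x' y'.
  have : g = gcdn x' y' * g by rewrite {1}/g def_x def_y -muln_gcdl.
  by rewrite -{1}[g]mul1n => /eqP; rewrite eqn_pmul2r // eq_sym.
have eq_red : a * x' * y' * g = n * (x' + y').
  apply/eqP; rewrite -(eqn_pmul2r g_gt0); apply/eqP.
  have -> : a * x' * y' * g * g = a * (x' * g) * (y' * g) by ring.
  by rewrite -def_x -def_y eq_axy def_x def_y; ring.
exists x', y'; split.
  have co_sum : coprime (x' * y') (x' + y').
    by rewrite coprimeMl /coprime gcdnDl gcdnDr [gcdn y' x']gcdnC andbb.
  rewrite -(Gauss_dvdl _ co_sum) -eq_red -[a * x' * y']mulnA.
  exact/dvdn_mulr/dvdn_mull.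
by rewrite -(Gauss_dvdr (x' + y') co_na) -eq_red -!mulnA dvdn_mulr.
Qed.

Section UnitsZp.

Context {a : nat}.
Hypothesis a_gt1 : 1 < a.

Lemma zval_inj (u w : {unit 'Z_a}) : zval u = zval w -> u = w.
Proof. by move/val_inj/val_inj. Qed.

Lemma zval_unit1 : zval (1%g : {unit 'Z_a}) = 1.
Proof. by rewrite FinRing.val_unit1 /= Zp_cast // modn_small. Qed.

Lemma zval_unitM (u w : {unit 'Z_a}) : zval (u * w)%g = zval u * zval w %% a.
Proof. by rewrite FinRing.val_unitM; apply: (congr1 (modn _) (Zp_cast a_gt1)). Qed.

Lemma coprime_zval (u : {unit 'Z_a}) : coprime (zval u) a.
Proof. by rewrite coprime_sym -unitZpE // natr_Zp (valP u). Qed.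

Lemma uval_minus1 : FinRing.uval (minus1 a) = (-1)%R.
Proof. by rewrite insubdK // unfold_in unitrN unitr1. Qed.

Lemma zval_minus1 : zval (minus1 a) = a.-1.
Proof.
rewrite uval_minus1 /= Zp_cast // [1 %% a]modn_small // subn1.
by rewrite modn_small // ltn_predL ltnW.
Qed.

Lemma resid_in1 (K : {group {unit 'Z_a}}) : resid_in K 1.
Proof. by exists 1%g; rewrite ?group1 ?zval_unit1 ?modn_small. Qed.

Lemma resid_inM {K : {group {unit 'Z_a}}} {m n} :
  resid_in K m -> resid_in K n -> resid_in K (m * n).
Proof.
move=> [u Ku u_m] [w Kw w_n]; exists (u * w)%g; first exact: groupM.
by rewrite zval_unitM u_m w_n modnMm.
Qed.

Lemma resid_in_coprime {H : {set {unit 'Z_a}}} {m} : resid_in H m -> coprime m a.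
Proof. by move=> [u _ u_m]; rewrite -coprime_modl -u_m coprime_zval. Qed.

Lemma resid_in_dvdn {K : {group {unit 'Z_a}}} {n} : 0 < n ->
    (forall q, prime q -> q %| n -> resid_in K q) ->
  forall d, d %| n -> resid_in K d.
Proof.
move=> n_gt0 Kprimes d; elim/ltn_ind: d => d IHd d_n.
have d_gt0 : 0 < d := dvdn_gt0 n_gt0 d_n.
have [d_gt1 | ] := ltnP 1 d; last first.
  by rewrite leq_eqVlt ltnS leqn0 eqn0Ngt d_gt0 orbF => /eqP ->; apply: resid_in1.
have p_d := pdiv_dvd d; have p_prime := pdiv_prime d_gt1.
rewrite -(divnK p_d); apply: resid_inM; last first.
  exact: Kprimes (dvdn_trans p_d d_n).
apply: IHd; first by rewrite ltn_Pdiv ?prime_gt1.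
exact: dvdn_trans (dvdn_div p_d) d_n.
Qed.

Lemma minus1_in_resid {K : {group {unit 'Z_a}}} {x y} :
  resid_in K x -> resid_in K y -> a %| x + y -> minus1 a \in K.
Proof.
move=> [u Ku u_x] [w Kw w_y] a_xy.
have uw : (minus1 a * w)%g = u.
  apply: zval_inj; rewrite zval_unitM zval_minus1 w_y u_x modnMmr.
  by apply/eqP; rewrite -(eqn_modDr y) (eqP a_xy) -mulSnr prednK ?modnMr // (ltnW a_gt1).
suff -> : minus1 a = (u * w^-1)%g by rewrite groupM ?groupV.
by rewrite -uw mulgK.
Qed.

Lemma Estar_of_subgroup (K : {group {unit 'Z_a}}) n :
    minus1 a \notin K -> 0 < n ->
    (forall q, prime q -> q %| n -> resid_in K q) ->
  Estar a n.
Proof.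
move=> m1K n_gt0 Kprimes; have Kdvd := resid_in_dvdn n_gt0 Kprimes.
have co_na := resid_in_coprime (Kdvd n (dvdnn n)).
split=> // -[x [y /(egypt_solE n_gt0) [x_gt0 _ eq_axy]]].
have [x' [y' [xy_n a_sum]]] := egypt_reduce x_gt0 co_na eq_axy.
case/negP: m1K; apply: (minus1_in_resid (Kdvd x' _) (Kdvd y' _) a_sum).
  exact: dvdn_trans (dvdn_mulr _ (dvdnn _)) xy_n.
exact: dvdn_trans (dvdn_mull _ (dvdnn _)) xy_n.
Qed.

End UnitsZp.

Section Reduction.

Context {a b : nat}.
Hypotheses (a_gt1 : 1 < a) (b_gt1 : 1 < b) (b_a : b %| a).

Lemma zval_redu (u : {unit 'Z_a}) : zval (redu a b u) = zval u %% b.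
Proof.
have unit_u : ((zval u)%:R : 'Z_b)%R \is a GRing.unit.
  by rewrite unitZpE // coprime_sym (coprime_dvdr b_a) ?coprime_zval.
by rewrite /redu -Zp_nat insubdK // val_Zp_nat.
Qed.

Lemma group_set_Hpre (K : {group {unit 'Z_b}}) : group_set (Hpre a b K).
Proof.
apply/group_setP; split=> [|u w]; rewrite !inE.
  suff -> : redu a b 1 = 1%g by rewrite group1.
  by apply: zval_inj; rewrite zval_redu !zval_unit1 // modn_small.
suff -> : redu a b (u * w) = (redu a b u * redu a b w)%g by apply: groupM.
by apply: zval_inj; rewrite zval_unitM // !zval_redu zval_unitM // modn_dvdm // modnMm.
Qed.

Lemma redu_minus1 : redu a b (minus1 a) = minus1 b.
Proof.
apply: zval_inj; rewrite zval_redu !zval_minus1 //.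
rewrite -[RHS](@modn_small _ b) ?ltn_predL ?(ltnW b_gt1) //.
apply/eqP; rewrite -(eqn_modDr 1) !addn1 !prednK ?(ltnW a_gt1) ?(ltnW b_gt1) //.
by rewrite modnn (eqP b_a).
Qed.

Lemma Estar_of_Hpre {K : {group {unit 'Z_b}}} {n} :
    minus1 b \notin K -> 0 < n ->
    (forall q, prime q -> q %| n -> resid_in (Hpre a b K) q) ->
  Estar a n.
Proof.
move=> m1K; apply: (Estar_of_subgroup a_gt1 (Group (group_set_Hpre K))).
by rewrite inE redu_minus1.
Qed.

End Reduction.

Section OddOrder.

Local Open Scope group_scope.

Lemma odd_orderM (gT : finGroupType) (x y : gT) :
  commute x y -> odd #[x] -> odd #[y] -> odd #[x * y].
Proof.
move=> cxy odd_x odd_y.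
apply: (@dvdn_odd _ (#[x] * #[y])%N); last by rewrite oddM odd_x.
rewrite order_dvdn expgMn // expgM expg_order expg1n mul1g.
by rewrite mulnC expgM expg_order expg1n.
Qed.

Lemma odd_order_expg2 (gT : finGroupType) (x : gT) :
  odd #[x] -> x ^+ 2 = 1 -> x = 1.
Proof.
move=> odd_x x2; apply/eqP; rewrite -order_eq1 -dvdn1.
have co_x2 : coprime #[x] 2 by rewrite coprimen2.
by rewrite -(eqP co_x2) dvdn_gcd dvdnn order_dvdn; apply/eqP.
Qed.

End OddOrder.

Lemma group_set_Hodd b : group_set (Hodd b).
Proof.
apply/group_setP; split=> [|u w]; rewrite !inE ?order1 // => odd_u odd_w.
by apply: odd_orderM odd_u odd_w; apply: val_inj; rewrite !FinRing.val_unitM mulrC.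
Qed.

Lemma minus1_notin_Hodd b : 2 < b -> minus1 b \notin Hodd b.
Proof.
move=> b_gt2; have b_gt1 := ltnW b_gt2; rewrite inE; apply/negP => odd_m1.
have : minus1 b = 1%g.
  apply: odd_order_expg2 odd_m1 _; apply: val_inj.
  by rewrite FinRing.val_unitX /= uval_minus1 // sqrrN expr1n.
move/(congr1 (fun u => zval u)); rewrite zval_minus1 // zval_unit1 // => b1.
by move: b_gt2; rewrite -(prednK (ltnW b_gt1)) b1.
Qed.

Lemma odd_prime_divisor {a} : 2 < a -> logn 2 a <= 1 ->
  exists2 p, prime p & odd p && (p %| a).
Proof.
move=> a_gt2 log_le1.
have [m co_2m def_a] := pfactor_coprime (isT : prime 2) (ltnW (ltnW a_gt2)).
have m_gt1 : 1 < m.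
  move: a_gt2; rewrite {1}def_a; apply: contraLR; rewrite -!leqNgt => m_le1.
  by rewrite -[X in _ <= X](mul1n (2 ^ 1)) leq_mul // leq_exp2l.
exists (pdiv m); first exact: pdiv_prime.
rewrite (dvdn_odd (pdiv_dvd m)) -?coprime2n // def_a.
exact: dvdn_mulr (pdiv_dvd m).
Qed.

Lemma mexp_gt0 {a} : 2 < a -> gamma0 a <= 1 -> 0 < mexp a.
Proof.
move=> a_gt2 g_le1.
have [p p_prime /andP [p_odd p_a]] := odd_prime_divisor a_gt2 g_le1.
set l := [seq q.-1 | q <- primes a & odd q].
have p_l : p.-1 \in l.
  by apply: map_f; rewrite mem_filter p_odd mem_primes p_prime p_a (ltnW (ltnW a_gt2)).
have delta0 : delta a = 0 by rewrite /delta ltnNge g_le1.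
rewrite /mexp delta0 -/l foldrE logn_gt0 mem_primes; apply/and3P; split=> //.
  by rewrite (big_rem _ p_l) gcdn_gt0 ltn_predRL prime_gt1.
rewrite big_seq; apply: (big_ind (dvdn 2)) => [//|x y x2 y2|q].
  by rewrite dvdn_gcd x2.
case/mapP => r; rewrite mem_filter => /andP [odd_r _] ->.
by case: r odd_r => //= r; rewrite dvdn2.
Qed.

Theorem lemma2p7 (a : nat) (H : {set {unit 'Z_a}}) :
  3 <= a -> in_frakH H ->
  forall n : nat, 0 < n ->
    (forall q : nat, prime q -> q %| n -> resid_in H q) ->
    Estar a n.
Proof.
move=> a_ge3 [index_H cases] n; have a_gt1 : 1 < a := ltnW a_ge3.
case: cases => [[p [p_prime p_odd p_a ->]] | [K [g_gt1 _ m1K ->]] | [g_le1 H_T]].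
- have p_gt2 := odd_prime_gt2 p_odd p_prime.
  have b_gt2 : 2 < p ^ logn p a.
    rewrite (leq_trans p_gt2) // -{1}(expn1 p) leq_exp2l ?prime_gt1 //.
    by rewrite logn_gt0 mem_primes p_prime p_a (ltnW (ltnW a_ge3)).
  apply: (Estar_of_Hpre a_gt1 (ltnW b_gt2) (pfactor_dvdnn p a)
           (K := Group (group_set_Hodd _))).
  exact: minus1_notin_Hodd.
- apply: (Estar_of_Hpre a_gt1 _ (pfactor_dvdnn 2 a) m1K).
  exact: leq_ltn_trans (ltnW g_gt1) (ltn_expl _ (isT : 1 < 2)).
- have := leq_ltn_trans (mexp_gt0 a_ge3 g_le1) (ltn_expl _ (isT : 1 < 2)).
  by rewrite -index_H H_T (indexgg [set: {unit 'Z_a}]%G).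
Qed.
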